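(* Let $w\in\mathfrak{S}_n$ and let $\varphi$ be a graph automorphism of $\Gamma(e,w)$ with $\varphi(w)=e$. (1) If $i<j<k$ and $w(i)>w(j)>w(k)$, then there exist $a<b<c$ with $w\ge t_{ac}$ such that $\varphi(\{wt_{ij},wt_{ik},wt_{jk}\})=\{t_{ab},t_{ac},t_{bc}\}$. (2) If $a<b<c$ and $w\ge t_{ac}$, then there exist $i<j<k$ with $w(i)>w(j)>w(k)$ such that $\varphi^{-1}(\{t_{ab},t_{ac},t_{bc}\})=\{wt_{ij},wt_{ik},wt_{jk}\}$.
   Context: $\mathfrak{S}_n$ is the symmetric group with simple generators $s_i=(i\ i{+}1)$; products are compositions $(uv)(m)=u(v(m))$. $t_{ij}$ denotes the transposition $(i\ j)$ for $i<j$; these are the reflections. $\le$ is Bruhat order and $e$ the identity. $\Gamma(e,w)$ is the simple undirected graph with vertex set $[e,w]=\{x:x\le w\}$ and edges $\{x,y\}$ whenever $y=xt$ for a transposition $t$. *)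

From mathcomp Require Import all_boot all_fingroup.
Set Implicit Arguments. Unset Strict Implicit. Unset Printing Implicit Defensive.

(* Permutations of {0,..,n-1} are elements of {perm 'I_n}.
   MathComp's product satisfies (s * t) x = t (s x); the paper's product
   (uv)(m) = u(v(m)) is therefore [pmul u v := v * u]. *)
Definition pmul n (u v : {perm 'I_n}) : {perm 'I_n} := (v * u)%g.

(* Coxeter length of a permutation = number of inversions *)
Definition inv_num n (x : {perm 'I_n}) : nat :=
  #|[set p : 'I_n * 'I_n | (p.1 < p.2) && (x p.2 < x p.1)]|.

Definition bruhat_step n (x y : {perm 'I_n}) : bool :=
  [exists i : 'I_n, exists j : 'I_n,
     [&& i < j, y == pmul x (tperm i j) & inv_num x < inv_num y]].

Definition bruhat n (x y : {perm 'I_n}) : bool := connect (@bruhat_step n) x y.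

Definition tadj n (x y : {perm 'I_n}) : bool :=
  [exists i : 'I_n, exists j : 'I_n, (i < j) && (y == pmul x (tperm i j))].

Definition binterval n (w : {perm 'I_n}) : {set {perm 'I_n}} :=
  [set x | bruhat x w].

Definition is_graph_aut n (w : {perm 'I_n}) (phi : {perm 'I_n} -> {perm 'I_n}) : Prop :=
  [/\ {in binterval w, forall x, phi x \in binterval w},
      {in binterval w &, injective phi} &
      {in binterval w &, forall x y, tadj (phi x) (phi y) = tadj x y}].

From mathcomp Require Import all_boot all_fingroup zify.
Set Implicit Arguments. Unset Strict Implicit. Unset Printing Implicit Defensive.

(* Gamma(e,w) is a piece of the Cayley graph of S_n for right multiplication by
   transpositions, so the neighbours of e are the transpositions.  Two distinct
   vertices x, y with three common neighbours z_1, z_2, z_3 force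
   {x^-1 z_1, x^-1 z_2, x^-1 z_3} = {t_ab, t_ac, t_bc} for some a < b < c: each z_m
   splits x^-1 y into a product of two transpositions, so x^-1 y moves three or four
   points, and a product of two disjoint transpositions has only two such splittings.
   For (1), w t_ij, w t_ik, w t_jk lie below w and have the second common neighbour
   w t_ij t_jk; phi carries this configuration to one around phi(w) = e.  For (2),
   t_ab, t_bc <= t_ab t_bc <= t_ac <= w have the common neighbours e and t_ab t_bc,
   and we pull back along phi.  Throughout, w t_pq <= w (p < q) holds exactly when
   w(p) > w(q), since the number of inversions drops exactly in that case. *)

Section Transpositions.

Local Open Scope group_scope.

Variable T : finType.
Implicit Types (u s t : {perm T}) (a b c p q : T) (S : {set {perm T}}).

Definition supp u : {set T} := [set p | u p != p].

Definition is_tperm s : Prop := exists p q, p != q /\ s = tperm p q.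

Lemma tperm_is_tperm p q : p != q -> is_tperm (tperm p q).
Proof. by exists p, q. Qed.

Lemma is_tpermK s : is_tperm s -> involutive s.
Proof. by move=> [p [q [_ ->]]]; apply: tpermK. Qed.

Lemma is_tperm2 s : is_tperm s -> s * s = 1.
Proof. by move=> [p [q [_ ->]]]; apply: tperm2. Qed.

Lemma supp_tperm p q : p != q -> supp (tperm p q) = [set p; q].
Proof.
move=> pq; apply/setP=> r; rewrite !inE.
by case: tpermP => [->|->|/eqP/negbTE-> /eqP/negbTE->]; rewrite ?eqxx ?orbT // eq_sym.
Qed.

Lemma card_supp_tperm s : is_tperm s -> #|supp s| = 2.
Proof. by move=> [p [q [pq ->]]]; rewrite supp_tperm // cards2 pq. Qed.

Lemma tperm_suppE s p : is_tperm s -> p \in supp s -> s = tperm p (s p).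
Proof.
move=> [a [b [ab ->]]]; rewrite supp_tperm // !inE.
by case/orP=> /eqP->; rewrite ?tpermL ?tpermR // tpermC.
Qed.

Lemma supp_tperm_inj s t : is_tperm s -> is_tperm t -> supp s = supp t -> s = t.
Proof.
move=> [a [b [ab ->]]] [c [d [cd ->]]]; rewrite !supp_tperm // => E.
have /[!inE] : a \in [set c; d] by rewrite -E !inE eqxx.
have /[!inE] : b \in [set c; d] by rewrite -E !inE eqxx orbT.
by case/orP=> /eqP Ea /orP[]/eqP Eb; subst; rewrite ?eqxx // in ab *; rewrite tpermC.
Qed.

Lemma supp_tpermM s t : is_tperm s -> is_tperm t -> s != t ->
  supp (s * t) = supp s :|: supp t.
Proof.
move=> Ts Tt st; apply/setP=> p; rewrite !inE permM.
have [-> //|sp] := eqVneq (s p) p; apply: contra_neq st => tsp.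
have tp : t p = s p by rewrite -{1}tsp (is_tpermK Tt).
have pt : p \in supp t by rewrite inE tp.
by rewrite (tperm_suppE Ts (_ : p \in supp s)) ?inE // (tperm_suppE Tt pt) tp.
Qed.

Definition tperm_factor u s : Prop := is_tperm s /\ is_tperm (u * s^-1).

Lemma supp_tperm_factor u s : u != 1 -> tperm_factor u s ->
  supp u = supp (u * s^-1) :|: supp s.
Proof.
move=> u1 [Ts Tus]; rewrite -{1}(mulgVK s u); apply: supp_tpermM => //.
by apply: contra_neq u1 => E; rewrite -(mulgVK s u) E is_tperm2.
Qed.

Lemma tperm_factor_sub_supp u s : u != 1 -> tperm_factor u s -> supp s \subset supp u.
Proof. by move=> u1 Fs; rewrite (supp_tperm_factor u1 Fs) subsetUr. Qed.

Lemma card_supp_tperm_factor_le u s : u != 1 -> tperm_factor u s -> #|supp u| <= 4.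
Proof.
move=> u1 [Ts Tus]; rewrite (supp_tperm_factor u1 (conj Ts Tus)).
by apply: leq_trans (leq_card_setU _ _) _; rewrite !card_supp_tperm.
Qed.

Lemma tperm_factor_on_supp u s p : u != 1 -> tperm_factor u s -> 4 <= #|supp u| ->
  p \in supp s -> u p = s p.
Proof.
move=> u1 [Ts Tus] u4 ps.
have [le_card /esym disj] := leq_card_setU (supp (u * s^-1)) (supp s).
have /disjointFl/(_ ps) : [disjoint supp (u * s^-1) & supp s].
  rewrite disj eqn_leq le_card !card_supp_tperm //.
  by rewrite -(supp_tperm_factor u1 (conj Ts Tus)).
by rewrite inE => /negbFE/eqP fix_p; rewrite -{1}(mulgVK s u) permM fix_p.
Qed.

Lemma tperm_factors_disjoint u s t : u != 1 -> 4 <= #|supp u| ->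
  tperm_factor u s -> tperm_factor u t -> s != t -> [disjoint supp s & supp t].
Proof.
move=> u1 u4 Fs Ft; apply: contraR => /pred0Pn[p /andP[ps pt]]; apply/eqP.
rewrite (tperm_suppE Fs.1 ps) (tperm_suppE Ft.1 pt).
by rewrite -(tperm_factor_on_supp u1 Fs) // -(tperm_factor_on_supp u1 Ft).
Qed.

Lemma card_supp_tperm_factors u S : u != 1 -> 2 < #|S| ->
  {in S, forall s, tperm_factor u s} -> #|supp u| = 3.
Proof.
move=> u1 /card_gt2P[s1 [s2 [s3 [[S1 S2 S3] [n12 n23 n31]]]]] FS.
have le4 := card_supp_tperm_factor_le u1 (FS _ S1).
have card2 s : s \in S -> #|supp s| = 2 by move/FS=> [Ts _]; apply: card_supp_tperm.
have sub_supp s : s \in S -> supp s \subset supp u by move/FS; apply: tperm_factor_sub_supp.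
have gt2 : 2 < #|supp u|.
  rewrite ltnNge; apply: contra_neqN n12 => le2; apply: supp_tperm_inj.
  - exact: (FS _ S1).1.
  - exact: (FS _ S2).1.
  suff supp_u s : s \in S -> supp s = supp u by rewrite !supp_u.
  by move=> Ss; apply/eqP; rewrite eqEcard sub_supp // (card2 s).
have ne4 : #|supp u| != 4.
  apply/negP=> /eqP u4; have disj s t : s \in S -> t \in S -> s != t ->
      [disjoint supp s & supp t].
    by move=> Ss St; apply: tperm_factors_disjoint (FS _ Ss) (FS _ St); rewrite ?u4.
  have : #|supp s1 :|: supp s2 :|: supp s3| <= 4.
    by rewrite -u4 subset_leq_card // !subUset !sub_supp.
  rewrite !cardsU setIUl !(disjoint_setI0 (disj _ _ _ _ _)) // 1?eq_sym //.
  by rewrite setU0 cards0 !card2.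
by apply/eqP; rewrite eqn_leq -ltnS ltn_neqAle ne4 le4 gt2.
Qed.

Definition tperm3 a b c : {set {perm T}} := [set tperm a b; tperm a c; tperm b c].

Lemma mem_tperm3 s a b c : is_tperm s -> supp s \subset [set a; b; c] ->
  s \in tperm3 a b c.
Proof.
move=> [p [q [pq ->]]]; rewrite supp_tperm // subUset !sub1set !inE.
move: pq => /[swap] /andP[/orP[/orP[]|] /eqP-> /orP[/orP[]|] /eqP->];
  by rewrite ?eqxx ?orbT //= tpermC eqxx ?orbT.
Qed.

Lemma card_tperm3 a b c : a != b -> a != c -> b != c -> #|tperm3 a b c| = 3.
Proof.
move=> ab ac bc; have neq s t p : s p != t p -> s != t by apply: contra_neq => ->.
rewrite /tperm3 -setUA cardsU1 cards2 !inE negb_or.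
by rewrite (neq _ _ b) ?(neq _ _ a) // ?tpermL ?tpermR ?tpermD // 1?eq_sym.
Qed.

Lemma tperm_cycle3 a b c : a != b -> a != c -> b != c ->
  tperm b c * tperm a b = tperm a b * tperm a c /\
  tperm a b * tperm a c = tperm a c * tperm b c.
Proof.
move=> ab ac bc; split; rewrite conjgC tpermJ.
  by rewrite tpermR tpermD // eq_sym.
by rewrite tpermL (tpermD ab) 1?(tpermC c b) // eq_sym.
Qed.

Lemma tperm3_factor a b c : a != b -> a != c -> b != c ->
  {in tperm3 a b c, forall t, tperm_factor (tperm b c * tperm a b) t}.
Proof.
move=> ab ac bc t; have [E1 E2] := tperm_cycle3 ab ac bc.
have cancel_r p q s : s * tperm p q * (tperm p q)^-1 = s by rewrite mulgK.
rewrite /tperm3 !inE => /orP[/orP[]|] /eqP->; split; try exact: tperm_is_tperm.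
- by rewrite cancel_r; apply: tperm_is_tperm.
- by rewrite E1 cancel_r; apply: tperm_is_tperm.
- by rewrite E1 E2 cancel_r; apply: tperm_is_tperm.
Qed.

Lemma tperm_cycle3_neq1 a b c : a != b -> a != c -> b != c ->
  tperm b c * tperm a b != 1.
Proof.
move=> ab ac bc; apply/eqP=> /permP/(_ a).
by rewrite permM perm1 (@tpermD _ b c a) 1?eq_sym // tpermL; apply/eqP; rewrite eq_sym.
Qed.

End Transpositions.

Lemma ltn_ord_neq n (p q : 'I_n) : p < q -> p != q.
Proof. by move=> pq; rewrite -val_eqE neq_ltn pq. Qed.

Lemma card3_ordP n (S : {set 'I_n}) : #|S| = 3 ->
  exists a b c : 'I_n, [/\ a < b, b < c & S = [set a; b; c]].
Proof.
move=> S3; have sorted_S : sorted (fun p q : 'I_n => p < q) (enum S).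
  have -> : enum S = [seq p <- enum 'I_n | p \in S] by rewrite enumT.
  apply: sorted_filter; first exact: ltn_trans.
  by rewrite -(sorted_map (f := val) (e' := ltn)) val_enum_ord iota_ltn_sorted.
move: sorted_S (set_enum S) (cardE S); rewrite S3.
case: (enum S) => [|a [|b [|c [|]]]] //= /andP[ab /andP[bc _]] <- _.
by exists a, b, c; split=> //; apply/setP=> p; rewrite !inE orbA.
Qed.

Lemma tperm_factors_tperm3 n (u : {perm 'I_n}) (S : {set {perm 'I_n}}) :
  u != 1%g -> #|S| = 3 -> {in S, forall s, tperm_factor u s} ->
  exists a b c : 'I_n, [/\ a < b, b < c & S = tperm3 a b c].
Proof.
move=> u1 S3 FS; have gt2 : 2 < #|S| by rewrite S3.
have [a [b [c [ab bc Su]]]] := card3_ordP (card_supp_tperm_factors u1 gt2 FS).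
have ac := ltn_trans ab bc.
exists a, b, c; split=> //; apply/eqP; rewrite eqEcard S3 card_tperm3 ?ltn_ord_neq //.
rewrite andbT; apply/subsetP=> s Ss; apply: mem_tperm3; first exact: (FS _ Ss).1.
by rewrite -Su; apply: tperm_factor_sub_supp u1 (FS _ Ss).
Qed.

Lemma pmulE n (x t : {perm 'I_n}) m : pmul x t m = x (t m).
Proof. by rewrite /pmul permM. Qed.

Lemma pmul_inj n (x : {perm 'I_n}) : injective (pmul x).
Proof. exact: mulIg. Qed.

Lemma pmul1x n (t : {perm 'I_n}) : pmul 1 t = t.
Proof. exact: mulg1. Qed.

Lemma imset_pmul1 n (A : {set {perm 'I_n}}) : pmul 1 @: A = A.
Proof. by rewrite -[RHS]imset_id; apply: eq_imset => t; rewrite pmul1x. Qed.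

Lemma pmul_tpermK n (x : {perm 'I_n}) (i j : 'I_n) :
  pmul (pmul x (tperm i j)) (tperm i j) = x.
Proof. by rewrite /pmul mulgA tperm2 mul1g. Qed.

Lemma tadjE n (x y : {perm 'I_n}) : tadj x y <-> is_tperm (y * x^-1)%g.
Proof.
split=> [/existsP[i /existsP[j /andP[ij /eqP->]]]|[p [q [pq E]]]].
  by rewrite /pmul mulgK; apply/tperm_is_tperm/ltn_ord_neq.
have -> : y = pmul x (tperm p q) by rewrite /pmul -E mulgVK.
case: (ltngtP p q) => [lt_pq|lt_qp|/val_inj eq_pq]; last by rewrite eq_pq eqxx in pq.
- by apply/existsP; exists p; apply/existsP; exists q; rewrite lt_pq eqxx.
- by apply/existsP; exists q; apply/existsP; exists p; rewrite lt_qp tpermC eqxx.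
Qed.

Lemma common_neighbours_tperm3 n (x y : {perm 'I_n}) (Z : {set {perm 'I_n}}) :
  x != y -> #|Z| = 3 -> {in Z, forall z, tadj x z /\ tadj z y} ->
  exists a b c : 'I_n, [/\ a < b, b < c & Z = pmul x @: tperm3 a b c].
Proof.
move=> xy Z3 adj; set u := (y * x^-1)%g.
(* every common neighbour z splits u as (y z^-1) (z x^-1) *)
have u1 : u != 1%g by rewrite /u -eq_mulgV1 eq_sym.
have FS : {in [set (z * x^-1)%g | z in Z], forall s, tperm_factor u s}.
  move=> _ /imsetP[z Zz ->]; have [/tadjE xz /tadjE zy] := adj z Zz.
  by split; rewrite // /u invMg invgK divgKA.
have card_S : #|[set (z * x^-1)%g | z in Z]| = 3 by rewrite card_imset //; apply: mulIg.
have [a [b [c [ab bc E]]]] := tperm_factors_tperm3 u1 card_S FS.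
exists a, b, c; split=> //; rewrite -E -imset_comp -[LHS]imset_id.
by apply: eq_imset => z; rewrite /= /pmul mulgVK.
Qed.

Lemma tperm3_common_neighbours n (x : {perm 'I_n}) (a b c : 'I_n) :
  a != b -> a != c -> b != c ->
  {in pmul x @: tperm3 a b c, forall z,
    tadj x z /\ tadj z (pmul x (pmul (tperm a b) (tperm b c)))}.
Proof.
move=> ab ac bc _ /imsetP[t Tt ->]; have [Tt' Tct] := tperm3_factor ab ac bc Tt.
by split; apply/tadjE; rewrite /pmul ?mulgK // invMg mulgA mulgK.
Qed.

Lemma inv_num_pmul_tperm_lt n (x : {perm 'I_n}) (i j : 'I_n) : i < j -> x j < x i ->
  inv_num (pmul x (tperm i j)) < inv_num x.
Proof.
move=> ij xji; rewrite /inv_num; set t := tperm i j.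
set Iy := [set p : 'I_n * 'I_n | _]; set Ix := [set p : 'I_n * 'I_n | _].
have tK : involutive t := tpermK i j.
(* f injects the inversions of x t into those of x other than (i, j) *)
pose f (p : 'I_n * 'I_n) := if t p.1 < t p.2 then (t p.1, t p.2) else p.
have f_inj : {in Iy &, injective f}.
  move=> [p1 p2] [q1 q2]; rewrite !inE /= /f /= => /andP[lt_p _] /andP[lt_q _].
  case: ifP => tp; case: ifP => tq //.
  - by case=> /perm_inj-> /perm_inj->.
  - by case=> e1 e2; move: tq; rewrite -e1 -e2 !tK lt_p.
  - by case=> e1 e2; move: tp; rewrite e1 e2 !tK lt_q.
have f_sub : f @: Iy \subset Ix :\ (i, j).
  apply/subsetP=> q /imsetP[[p1 p2]]; rewrite inE /= !pmulE => /andP[lt_p inv_p] ->.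
  rewrite /f /=; case: ifP => tp; rewrite !inE /= ?tp ?inv_p ?andbT.
    apply/negP=> /eqP[e1 e2]; move: lt_p.
    by rewrite -(tK p1) -(tK p2) e1 e2 /t tpermL tpermR ltnNge (ltnW ij).
  have -> /= : (p1, p2) != (i, j).
    by apply: contraTneq inv_p => -[-> ->]; rewrite /t tpermL tpermR -leqNgt ltnW.
  rewrite lt_p /=; move: lt_p tp inv_p; rewrite /t.
  by case: (tpermP i j p1) => [->|->|]; case: (tpermP i j p2) => [->|->|] //=; lia.
rewrite -(card_in_imset f_inj); apply: leq_ltn_trans (subset_leq_card f_sub) _.
by rewrite [X in _ < X](cardsD1 (i, j) Ix) inE /= ij xji.
Qed.

Lemma bruhat_pmul_tperm n (x : {perm 'I_n}) (i j : 'I_n) : i < j -> x j < x i ->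
  bruhat (pmul x (tperm i j)) x.
Proof.
move=> ij xji; apply/connect1/existsP; exists i; apply/existsP; exists j.
by rewrite ij pmul_tpermK eqxx inv_num_pmul_tperm_lt.
Qed.

Lemma inv_num_bruhat n (x y : {perm 'I_n}) : bruhat x y -> inv_num x <= inv_num y.
Proof.
move/connectP=> [p]; elim: p x => [|z p IHp] x /=; first by move=> _ ->.
move=> /andP[/existsP[i /existsP[j /and3P[_ _ lt_xz]]] path_z] y_last.
exact: leq_trans (ltnW lt_xz) (IHp z path_z y_last).
Qed.

Lemma bruhat_pmul_tpermE n (w : {perm 'I_n}) (i j : 'I_n) : i < j ->
  bruhat (pmul w (tperm i j)) w = (w j < w i).
Proof.
move=> ij; apply/idP/idP; last exact: bruhat_pmul_tperm.
move/inv_num_bruhat; case: ltngtP => // [lt_ij|/val_inj/perm_inj eq_ji]; last first.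
  by rewrite eq_ji ltnn in ij.
have := @inv_num_pmul_tperm_lt n (pmul w (tperm i j)) i j ij.
by rewrite !pmulE tpermL tpermR pmul_tpermK => /(_ lt_ij); rewrite ltnNge => /negbTE->.
Qed.

Lemma bruhat_tperm3 n (a b c : 'I_n) : a < b -> b < c ->
  let v := pmul (tperm a b) (tperm b c) in
  [/\ bruhat v (tperm a c), bruhat (tperm a b) v & bruhat (tperm b c) v].
Proof.
move=> ab bc v; have ac := ltn_trans ab bc.
have [ne_ab ne_ac ne_bc] := And3 (ltn_ord_neq ab) (ltn_ord_neq ac) (ltn_ord_neq bc).
have [E1 E2] := tperm_cycle3 ne_ab ne_ac ne_bc.
have va : v a = b by rewrite pmulE (@tpermD _ b c a) 1?eq_sym // tpermL.
have vb : v b = c by rewrite pmulE tpermL tpermD // eq_sym.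
have vc : v c = a by rewrite pmulE tpermR tpermR.
split.
- have -> : v = pmul (tperm a c) (tperm a b) by rewrite /v /pmul E1.
  by apply: bruhat_pmul_tperm; rewrite // tpermL tpermD // eq_sym.
- have -> : tperm a b = pmul v (tperm b c) by rewrite /v /pmul mulgA tperm2 mul1g.
  by apply: bruhat_pmul_tperm; rewrite ?vb ?vc.
- have -> : tperm b c = pmul v (tperm a c) by rewrite /v /pmul E1 E2 mulgA tperm2 mul1g.
  by apply: bruhat_pmul_tperm; rewrite ?va ?vc.
Qed.

Lemma in_binterval n (w x : {perm 'I_n}) : (x \in binterval w) = bruhat x w.
Proof. by rewrite inE. Qed.

Lemma binterval_refl n (w : {perm 'I_n}) : w \in binterval w.
Proof. by rewrite in_binterval; apply: connect0. Qed.

Section GraphAutomorphism.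

Variables (n : nat) (w : {perm 'I_n}) (phi : {perm 'I_n} -> {perm 'I_n}).
Hypothesis phi_aut : is_graph_aut w phi.
Local Notation I := (binterval w).

Lemma graph_aut_imset : phi @: I = I.
Proof.
have [phiI phi_inj _] := phi_aut; apply/eqP; rewrite eqEcard card_in_imset // leqnn andbT.
by apply/subsetP=> _ /imsetP[x xI ->]; apply: phiI.
Qed.

Lemma card_graph_aut_preimset (A : {set {perm 'I_n}}) : A \subset I ->
  #|[set x in I | phi x \in A]| = #|A|.
Proof.
move=> AI; have [_ phi_inj _] := phi_aut.
have preim_inj : {in [set x in I | phi x \in A] &, injective phi}.
  by apply: sub_in2 phi_inj => x; rewrite inE => /andP[].
suff E : phi @: [set x in I | phi x \in A] = A by rewrite -[in RHS]E card_in_imset.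
apply/setP=> y; apply/imsetP/idP=> [[x /[!inE] /andP[_ Ax] ->] // | Ay].
have /imsetP[x xI yE] : y \in phi @: I by rewrite graph_aut_imset (subsetP AI).
by exists x; rewrite // inE xI -yE Ay.
Qed.

Lemma graph_aut_tperm3 x y (Z : {set {perm 'I_n}}) :
  x \in I -> y \in I -> Z \subset I -> x != y -> #|Z| = 3 ->
  {in Z, forall z, tadj x z /\ tadj z y} ->
  exists a b c : 'I_n, [/\ a < b, b < c & phi @: Z = pmul (phi x) @: tperm3 a b c].
Proof.
move=> xI yI ZI xy Z3 adj; have [_ phi_inj phi_adj] := phi_aut.
apply: common_neighbours_tperm3.
- by apply: contra_neq xy; apply: phi_inj.
- by rewrite card_in_imset // => u v /(subsetP ZI) uI /(subsetP ZI); apply: phi_inj.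
move=> _ /imsetP[z Zz ->]; have zI := subsetP ZI z Zz.
by rewrite !phi_adj //; apply: adj.
Qed.

Hypothesis phi_w : phi w = 1%g.

Lemma graph_aut_inversions_tperm3 (i j k : 'I_n) :
  i < j -> j < k -> w j < w i -> w k < w j ->
  exists a b c : 'I_n, [/\ a < b, b < c, bruhat (tperm a c) w &
    phi @: (pmul w @: tperm3 i j k) = tperm3 a b c].
Proof.
move=> ij jk wji wkj; have ik := ltn_trans ij jk; have wki := ltn_trans wkj wji.
have [ne_ij ne_ik ne_jk] := And3 (ltn_ord_neq ij) (ltn_ord_neq ik) (ltn_ord_neq jk).
have ZI : pmul w @: tperm3 i j k \subset I.
  apply/subsetP=> _ /imsetP[t /[!inE] /orP[/orP[]|] /eqP-> ->];
  by rewrite bruhat_pmul_tpermE.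
set v := pmul w (pmul (tperm i j) (tperm j k)).
have vI : v \in I.
  have -> : v = pmul (pmul w (tperm i j)) (tperm j k) by rewrite /v /pmul mulgA.
  rewrite in_binterval; apply: connect_trans (_ : bruhat (pmul w (tperm i j)) w).
    by apply: bruhat_pmul_tperm; rewrite // !pmulE tpermR tpermD // eq_sym.
  by rewrite bruhat_pmul_tpermE.
have wv : w != v.
  apply: contra_neq (tperm_cycle3_neq1 ne_ij ne_ik ne_jk) => wv.
  by apply: (@mulIg _ w); rewrite mul1g [RHS]wv.
have Z3 : #|pmul w @: tperm3 i j k| = 3 by rewrite card_imset ?card_tperm3 //; apply: pmul_inj.
have [a [b [c [ab bc E]]]] := graph_aut_tperm3 (binterval_refl w) vI ZI wv Z3
  (tperm3_common_neighbours ne_ij ne_ik ne_jk).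
rewrite phi_w imset_pmul1 in E; exists a, b, c; split=> //.
have : tperm a c \in phi @: (pmul w @: tperm3 i j k) by rewrite E !inE eqxx orbT.
by move/(subsetP (imsetS phi ZI)); rewrite graph_aut_imset in_binterval.
Qed.

Lemma graph_aut_tperm3_inversions (a b c : 'I_n) :
  a < b -> b < c -> bruhat (tperm a c) w ->
  exists i j k : 'I_n, [/\ i < j, j < k, w j < w i, w k < w j &
    [set x in I | phi x \in tperm3 a b c] = pmul w @: tperm3 i j k].
Proof.
move=> ab bc acw; have ac := ltn_trans ab bc; have [_ _ phi_adj] := phi_aut.
have [ne_ab ne_ac ne_bc] := And3 (ltn_ord_neq ab) (ltn_ord_neq ac) (ltn_ord_neq bc).
set v0 := pmul (tperm a b) (tperm b c); have [v0_ac ab_v0 bc_v0] := bruhat_tperm3 ab bc.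
have v0w : bruhat v0 w := connect_trans v0_ac acw.
have TI : tperm3 a b c \subset I.
  rewrite /tperm3 !subUset !sub1set !in_binterval acw andbT.
  by apply/andP; split; apply: connect_trans v0w.
have /imsetP[v vI v0E] : v0 \in phi @: I by rewrite graph_aut_imset in_binterval.
set Z := [set x in I | phi x \in tperm3 a b c].
have ZI : Z \subset I by apply/subsetP=> x; rewrite inE => /andP[].
have Z3 : #|Z| = 3 by rewrite card_graph_aut_preimset // card_tperm3.
have wv : w != v.
  by apply: contra_neq (tperm_cycle3_neq1 ne_ab ne_ac ne_bc) => wv; rewrite -phi_w wv -v0E.
have adj : {in Z, forall z, tadj w z /\ tadj z v}.
  move=> z; rewrite inE => /andP[zI Tz].
  have [] := tperm3_common_neighbours (x := 1%g) ne_ab ne_ac ne_bc (_ : phi z \in _).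
    by rewrite imset_pmul1.
  by rewrite pmul1x -/v0 v0E -phi_w !phi_adj ?binterval_refl.
have [i [j [k [ij jk E]]]] := common_neighbours_tperm3 wv Z3 adj.
have inv (p q : 'I_n) : p < q -> tperm p q \in tperm3 i j k -> w q < w p.
  by move=> pq Tpq; rewrite -bruhat_pmul_tpermE // -in_binterval (subsetP ZI) // E imset_f.
by exists i, j, k; split=> //; apply: inv; rewrite // /tperm3 !inE eqxx ?orbT.
Qed.

End GraphAutomorphism.

Theorem lemma4p2 (n : nat) (w : {perm 'I_n}) (phi : {perm 'I_n} -> {perm 'I_n}) :
  is_graph_aut w phi -> phi w = 1%g ->
  (forall i j k : 'I_n, i < j -> j < k -> w j < w i -> w k < w j ->
     exists a b c : 'I_n, [/\ a < b, b < c, bruhat (tperm a c) w &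
       phi @: [set pmul w (tperm i j); pmul w (tperm i k); pmul w (tperm j k)]
       = [set tperm a b; tperm a c; tperm b c]]) /\
  (forall a b c : 'I_n, a < b -> b < c -> bruhat (tperm a c) w ->
     exists i j k : 'I_n, [/\ i < j, j < k, w j < w i, w k < w j &
       [set x in binterval w | phi x \in [set tperm a b; tperm a c; tperm b c]]
       = [set pmul w (tperm i j); pmul w (tperm i k); pmul w (tperm j k)]]).
Proof.
move=> phi_aut phi_w; split.
- move=> i j k ij jk wji wkj.
  have [a [b [c [ab bc acw E]]]] := graph_aut_inversions_tperm3 phi_aut phi_w ij jk wji wkj.
  exists a, b, c; split=> //; rewrite -[RHS]/(tperm3 a b c) -E.
  by rewrite /tperm3 !imsetU !imset_set1.
- move=> a b c ab bc acw.
  have [i [j [k [ij jk wji wkj E]]]] := graph_aut_tperm3_inversions phi_aut phi_w ab bc acw.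
  by exists i, j, k; split=> //; rewrite E /tperm3 !imsetU !imset_set1.
Qed.
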